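(* Let $\alpha_1,\alpha_2,\alpha_3,\beta_1,\beta_2,\beta_3,\beta_4,\gamma_1,\gamma_2,\gamma_3,\gamma_4$ be positive real constants satisfying $$\alpha_1+\alpha_2+\alpha_3=\beta_1-\beta_4=\gamma_1-\gamma_4.$$ Set $A_4=\alpha_1-(\gamma_1-\gamma_4)-\gamma_2$, $A_5=\beta_2-\gamma_2$, $A_6=\alpha_2-\gamma_3$, $A_7=(\beta_1-\beta_2-\beta_3-\beta_4)-(\gamma_1-\gamma_4)-\gamma_3$, and consider the planar linear system $$\frac{dx_0}{dt}=A_4x_0+A_5x_1+\gamma_2,\qquad \frac{dx_1}{dt}=A_6x_0+A_7x_1+\gamma_3.$$ Then this system has a unique fixed point $E=(x_0^*,x_1^* )$, it is stable, and $$x_0^*=\frac{A_5\gamma_3-A_7\gamma_2}{A_4A_7-A_5A_6}>0,\qquad x_1^*=\frac{A_6\gamma_2-A_4\gamma_3}{A_4A_7-A_5A_6}>0.$$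
   Context: This is the ''reversible model'' for the proportions $x_0,x_1$ (and $x_2=1-x_0-x_1$) of three cancer cell phenotypes (CSC$_0$, NSCC$_1$, NSCC$_2$) in the special case where the per capita growth rate of the total population due to each phenotype is the same. The parameters are rates: $\alpha_1$ (CSC symmetric division), $\alpha_2,\alpha_3$ (asymmetric CSC division producing NSCC$_1$, NSCC$_2$), $\beta_1,\gamma_1$ (NSCC divisions), $\beta_2,\gamma_2$ (de-differentiation to CSC), $\beta_3,\gamma_3$ (interconversion between NSCC$_1$ and NSCC$_2$), $\beta_4,\gamma_4$ (death). ''Stable'' means the fixed point is asymptotically stable (both eigenvalues of the linearization have negative real part). *)

From HB Require Import structures.
From mathcomp Require Import all_boot all_order all_algebra.
From mathcomp Require Import complex.
Set Implicit Arguments. Unset Strict Implicit. Unset Printing Implicit Defensive.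
Import Order.TTheory GRing.Theory Num.Theory.
Local Open Scope ring_scope.

Definition vfield (R : rcfType) (A4 A5 A6 A7 g2 g3 : R) (x : R * R) : R * R :=
  (A4 * x.1 + A5 * x.2 + g2, A6 * x.1 + A7 * x.2 + g3).

Definition is_fixed_point (R : rcfType) (A4 A5 A6 A7 g2 g3 : R) (x : R * R) : Prop :=
  vfield A4 A5 A6 A7 g2 g3 x = (0, 0).

(* Jacobian (linearization) of the system; constant since the system is linear. *)
Definition jac (R : rcfType) (A4 A5 A6 A7 : R) : 'M[R]_2 :=
  \matrix_(i < 2, j < 2)
     (if i == 0 :> nat then (if j == 0 :> nat then A4 else A5)
                       else (if j == 0 :> nat then A6 else A7)).

Definition asympt_stable (R : rcfType) (A4 A5 A6 A7 : R) (E : R * R) : Prop :=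
  forall lambda : R[i],
    eigenvalue (map_mx (fun r : R => (r%:C)%C) (jac A4 A5 A6 A7)) lambda ->
    complex.Re lambda < 0.

(** The hypotheses [a1 + a2 + a3 = b1 - b4 = g1 - g4] eliminate the growth rates
    from the diagonal of the Jacobian: [A4 = -(a2 + a3 + g2)] and
    [A7 = -(b2 + b3 + g3)].  Hence the trace is negative, while the determinant
    and both Cramer numerators expand into sums of products of positive rates.
    A nonzero determinant gives the unique equilibrium by Cramer's rule, and for
    a real 2x2 matrix a negative trace and a positive determinant force both
    roots of [l^2 - tr l + det] into the open left half-plane. *)

From HB Require Import structures.
From mathcomp Require Import all_boot all_order all_algebra.
From mathcomp Require Import complex ring lra.
Set Implicit Arguments. Unset Strict Implicit. Unset Printing Implicit Defensive.
Import Order.TTheory GRing.Theory Num.Theory.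
Local Open Scope ring_scope.

Lemma det_mx22 (R : comNzRingType) (M : 'M[R]_2) :
  \det M = M 0 0 * M 1 1 - M 0 1 * M 1 0.
Proof.
rewrite (expand_det_row _ 0) !big_ord_recl big_ord0 addr0 /cofactor !det_mx11 !mxE /=.
rewrite expr0 expr1 mul1r mulN1r mulrN; congr (_ * _ - _ * _); congr (M _ _); exact/val_inj.
Qed.

Lemma tr_mx22 (R : comNzRingType) (M : 'M[R]_2) : \tr M = M 0 0 + M 1 1.
Proof.
by rewrite /mxtrace !big_ord_recl big_ord0 addr0; congr (_ + M _ _); exact/val_inj.
Qed.

Lemma eigenvalue_mx22 (F : fieldType) (M : 'M[F]_2) a :
  eigenvalue M a = ((a - M 0 0) * (a - M 1 1) == M 0 1 * M 1 0).
Proof.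
rewrite eigenvalue_root_char /root /char_poly det_mx22 !mxE /= !hornerE /=.
by rewrite mulrNN subr_eq0.
Qed.

Lemma Re_lt0_root_quadratic (R : rcfType) (t d : R) (l : R[i]) :
  t < 0 -> 0 < d -> l * l - (t%:C)%C * l + (d%:C)%C = 0 -> complex.Re l < 0.
Proof.
move=> t_lt0 d_gt0; case: l => x y /=.
move/eqP; rewrite eq_complex /= => /andP [/eqP re_eq /eqP im_eq].
have : y * (2 * x - t) = 0 by rewrite -im_eq; ring.
move/eqP; rewrite mulf_eq0 => /orP [/eqP y0 | /eqP x_eq]; last by lra.
(* a real root is negative: for [x >= 0] every term of [x^2 - t x + d] is [>= 0] and [d > 0] *)
rewrite y0 in re_eq; rewrite ltNge; apply/negP => x_ge0; nra.
Qed.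

Lemma Re_lt0_eigenvalue_mx22 (R : rcfType) (M : 'M[R]_2) (l : R[i]) :
  \tr M < 0 -> 0 < \det M ->
  eigenvalue (map_mx (fun r : R => (r%:C)%C) M) l -> complex.Re l < 0.
Proof.
rewrite tr_mx22 det_mx22 eigenvalue_mx22 !mxE => tr_lt0 det_gt0 /eqP char_eq.
apply: (Re_lt0_root_quadratic tr_lt0 det_gt0).
rewrite rmorphD rmorphB !rmorphM -(subrr ((M 0 1)%:C * (M 1 0)%:C)%C) -{1}char_eq.
ring.
Qed.

Section PlanarLinearSystem.
Variables (R : rcfType) (A4 A5 A6 A7 g2 g3 : R).

Lemma tr_jac : \tr (jac A4 A5 A6 A7) = A4 + A7.
Proof. by rewrite tr_mx22 !mxE. Qed.

Lemma det_jac : \det (jac A4 A5 A6 A7) = A4 * A7 - A5 * A6.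
Proof. by rewrite det_mx22 !mxE. Qed.

Lemma asympt_stable_jac (E : R * R) :
  A4 + A7 < 0 -> 0 < A4 * A7 - A5 * A6 -> asympt_stable A4 A5 A6 A7 E.
Proof.
move=> tr_lt0 det_gt0 l; apply: Re_lt0_eigenvalue_mx22; by rewrite ?tr_jac ?det_jac.
Qed.

Lemma is_fixed_pointE (E : R * R) : A4 * A7 - A5 * A6 != 0 ->
  is_fixed_point A4 A5 A6 A7 g2 g3 E <->
  E = ((A5 * g3 - A7 * g2) / (A4 * A7 - A5 * A6),
       (A6 * g2 - A4 * g3) / (A4 * A7 - A5 * A6)).
Proof.
move=> det_neq0; case: E => u w; rewrite /is_fixed_point /vfield /=; split.
  case=> eq0 eq1; congr pair; apply/(mulIf det_neq0); rewrite divfK //.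
    transitivity (A7 * (A4 * u + A5 * w + g2) - A5 * (A6 * u + A7 * w + g3)
                  + (A5 * g3 - A7 * g2)); first ring.
    by rewrite eq0 eq1; ring.
  transitivity (A4 * (A6 * u + A7 * w + g3) - A6 * (A4 * u + A5 * w + g2)
                + (A6 * g2 - A4 * g3)); first ring.
  by rewrite eq0 eq1; ring.
by case=> -> ->; congr pair; field.
Qed.

End PlanarLinearSystem.

Section ReversibleModelSigns.
Variables (R : rcfType) (a2 a3 b2 b3 g2 g3 : R).
Hypotheses (ha2 : 0 < a2) (ha3 : 0 < a3) (hb2 : 0 < b2) (hb3 : 0 < b3)
  (hg2 : 0 < g2) (hg3 : 0 < g3).

Lemma reversible_det_gt0 :
  0 < -(a2 + a3 + g2) * -(b2 + b3 + g3) - (b2 - g2) * (a2 - g3).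
Proof.
have -> : -(a2 + a3 + g2) * -(b2 + b3 + g3) - (b2 - g2) * (a2 - g3)
  = a2 * (b3 + g2 + g3) + a3 * (b2 + b3 + g3) + b2 * (g2 + g3) + b3 * g2 by ring.
by rewrite !addr_gt0 // mulr_gt0 // !addr_gt0.
Qed.

Lemma reversible_x0_num_gt0 : 0 < (b2 - g2) * g3 - -(b2 + b3 + g3) * g2.
Proof.
have -> : (b2 - g2) * g3 - -(b2 + b3 + g3) * g2 = b2 * (g2 + g3) + b3 * g2 by ring.
by rewrite addr_gt0 // mulr_gt0 // addr_gt0.
Qed.

Lemma reversible_x1_num_gt0 : 0 < (a2 - g3) * g2 - -(a2 + a3 + g2) * g3.
Proof.
have -> : (a2 - g3) * g2 - -(a2 + a3 + g2) * g3 = a2 * (g2 + g3) + a3 * g3 by ring.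
by rewrite addr_gt0 // mulr_gt0 // addr_gt0.
Qed.

End ReversibleModelSigns.

Theorem theorem1 (R : rcfType)
  (a1 a2 a3 b1 b2 b3 b4 g1 g2 g3 g4 : R)
  (ha1 : 0 < a1) (ha2 : 0 < a2) (ha3 : 0 < a3)
  (hb1 : 0 < b1) (hb2 : 0 < b2) (hb3 : 0 < b3) (hb4 : 0 < b4)
  (hg1 : 0 < g1) (hg2 : 0 < g2) (hg3 : 0 < g3) (hg4 : 0 < g4)
  (h1 : a1 + a2 + a3 = b1 - b4) (h2 : b1 - b4 = g1 - g4) :
  let A4 := a1 - (g1 - g4) - g2 in
  let A5 := b2 - g2 in
  let A6 := a2 - g3 in
  let A7 := (b1 - b2 - b3 - b4) - (g1 - g4) - g3 in
  let x0s := (A5 * g3 - A7 * g2) / (A4 * A7 - A5 * A6) in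
  let x1s := (A6 * g2 - A4 * g3) / (A4 * A7 - A5 * A6) in
  (forall E : R * R, is_fixed_point A4 A5 A6 A7 g2 g3 E <-> E = (x0s, x1s))
  /\ asympt_stable A4 A5 A6 A7 (x0s, x1s)
  /\ 0 < x0s /\ 0 < x1s.
Proof.
move=> A4 A5 A6 A7 x0s x1s.
have eA4 : A4 = -(a2 + a3 + g2) by rewrite /A4 -h2 -h1; ring.
have eA7 : A7 = -(b2 + b3 + g3) by rewrite /A7 -h2; ring.
have det_gt0 : 0 < A4 * A7 - A5 * A6 by rewrite eA4 eA7; exact: reversible_det_gt0.
have x0_num_gt0 : 0 < A5 * g3 - A7 * g2 by rewrite eA7; exact: reversible_x0_num_gt0.
have x1_num_gt0 : 0 < A6 * g2 - A4 * g3 by rewrite eA4; exact: reversible_x1_num_gt0.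
split; [|split; [|split]].
- by move=> E; apply: is_fixed_pointE; rewrite gt_eqF.
- by apply: asympt_stable_jac; rewrite // eA4 eA7; lra.
- exact: divr_gt0.
- exact: divr_gt0.
Qed.
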